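(* Let $\theta=(\gamma,\mu,\sigma)\in\mathbb{R}\times\mathbb{R}\times(0,\infty)$ and $x\in\mathbb{R}$ with $1+\gamma z>0$, where $z=(x-\mu)/\sigma$, and let $u=u_\gamma(z)$. Then \[|\partial_\sigma\ell_\theta(x)|\le\begin{cases}\dfrac{z+1}{\sigma(1+\gamma z)}&\text{if }z\ge0,\\[1ex] \sigma^{-1}\big(1+u\log u\big)\,u^{\max(\gamma,0)}&\text{if }z\le0.\end{cases}\]
   Context: $u_\gamma(z)=(1+\gamma z)^{-1/\gamma}$ for $\gamma\ne0$ and $e^{-z}$ for $\gamma=0$. $\ell_\theta(x)=\log p_\theta(x)=-\log\sigma-u+(\gamma+1)\log u$ is the GEV log-density on $\{1+\gamma z>0\}$ (GEV density $p_\theta(x)=\sigma^{-1}e^{-u}u^{\gamma+1}\mathbf 1(1+\gamma z>0)$); its partial derivative in $\sigma$ is $\partial_\sigma\ell_\theta(x)=\frac{(1-u)z-1}{\sigma(1+\gamma z)}$. *)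

From Stdlib Require Import Reals.
Open Scope R_scope.

(* u_gamma(z) = (1 + gamma z)^(-1/gamma) for gamma <> 0, exp(-z) for gamma = 0.
   Only used on {1 + gamma z > 0}, where the real power is the usual one. *)
Definition u_gamma (gamma z : R) : R :=
  if Req_EM_T gamma 0 then exp (- z)
  else Rpower (1 + gamma * z) (- / gamma).

Definition zstd (mu sigma x : R) : R := (x - mu) / sigma.

(* Partial derivative in sigma of the GEV log-density, as given in the context:
   d_sigma l_theta(x) = ((1 - u) z - 1) / (sigma (1 + gamma z)). *)
Definition dsigma_ell (gamma mu sigma x : R) : R :=
  let z := zstd mu sigma x in
  let u := u_gamma gamma z in
  ((1 - u) * z - 1) / (sigma * (1 + gamma * z)).

(** Write [w = 1 + gamma z], so that [u^gamma = 1/w] and [d_sigma l = N / (sigma w)]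
    with numerator [N = (1 - u) z - 1]. For [z >= 0] one has [u <= 1], hence
    [0 <= (1 - u) z <= z] and [|N| <= z + 1]. For [z <= 0] one has [u >= 1]; splitting
    [u^gamma = u^(min gamma 0) u^(max gamma 0)] reduces the claim to
    [|N| p <= 1 + u ln u] with [p = u^(min gamma 0) <= 1], which follows from
    [-z p <= ln u]. Since [gamma ln u = - ln w], that last bound is one of the two
    elementary inequalities [1 - 1/w <= ln w <= w - 1], according to the sign of gamma. *)

From Stdlib Require Import Reals Lra.
Open Scope R_scope.

Lemma ln_le_sub1 (w : R) : 0 < w -> ln w <= w - 1.
Proof.
  intro Hw.
  pose proof (exp_ineq1_le (ln w)) as H.
  rewrite exp_ln in H by exact Hw; lra.
Qed.

Lemma one_sub_inv_le_ln (w : R) : 0 < w -> 1 - / w <= ln w.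
Proof.
  intro Hw.
  pose proof (exp_ineq1_le (- ln w)) as H.
  rewrite exp_Ropp, exp_ln in H by exact Hw; lra.
Qed.

Lemma exp_le_1 (t : R) : t <= 0 -> exp t <= 1.
Proof.
  intro Ht; rewrite <- exp_0.
  destruct (Req_dec t 0) as [->|Hne]; [lra|].
  left; apply exp_increasing; lra.
Qed.

Lemma Rmin_plus_Rmax (a b : R) : Rmin a b + Rmax a b = a + b.
Proof. unfold Rmin, Rmax; destruct (Rle_dec a b); lra. Qed.

Section UGamma.

Variables gamma z : R.
Hypothesis Hw : 0 < 1 + gamma * z.

Lemma u_gamma_pos : 0 < u_gamma gamma z.
Proof.
  unfold u_gamma, Rpower; destruct (Req_EM_T gamma 0); apply exp_pos.
Qed.

Lemma ln_u_gamma0 : gamma = 0 -> ln (u_gamma gamma z) = - z.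
Proof.
  intros ->; unfold u_gamma; destruct (Req_EM_T 0 0) as [_|]; [|lra].
  apply ln_exp.
Qed.

Lemma mul_ln_u_gamma : gamma * ln (u_gamma gamma z) = - ln (1 + gamma * z).
Proof.
  unfold u_gamma, Rpower; destruct (Req_EM_T gamma 0) as [->|Hg].
  - rewrite Rmult_0_l, Rmult_0_l, Rplus_0_r, ln_1; ring.
  - rewrite ln_exp; field; exact Hg.
Qed.

Lemma Rpower_u_gamma : Rpower (u_gamma gamma z) gamma = / (1 + gamma * z).
Proof.
  unfold Rpower at 1; rewrite mul_ln_u_gamma, exp_Ropp, exp_ln by exact Hw.
  reflexivity.
Qed.

Lemma ln_u_gamma_nonpos : 0 <= z -> ln (u_gamma gamma z) <= 0.
Proof.
  intro Hz.
  destruct (Req_dec gamma 0) as [Hg|Hg]; [rewrite ln_u_gamma0 by exact Hg; lra|].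
  pose proof mul_ln_u_gamma as Hgt.
  pose proof (ln_le_sub1 _ Hw) as Hup.
  pose proof (one_sub_inv_le_ln _ Hw) as Hlow.
  assert (Hinv : / (1 + gamma * z) * (1 + gamma * z) = 1) by (field; lra).
  destruct (Rlt_dec 0 gamma) as [Hgp|Hgn].
  - assert (0 <= ln (1 + gamma * z)) by nra. nra.
  - assert (ln (1 + gamma * z) <= 0) by nra. nra.
Qed.

Lemma ln_u_gamma_lower :
  z <= 0 -> - z * Rpower (u_gamma gamma z) (Rmin gamma 0) <= ln (u_gamma gamma z).
Proof.
  intro Hz.
  pose proof u_gamma_pos as Hu.
  destruct (Rle_dec 0 gamma) as [Hgp|Hgn].
  - rewrite Rmin_right, Rpower_O by lra.
    destruct (Req_dec gamma 0) as [Hg|Hg]; [rewrite ln_u_gamma0 by exact Hg; lra|].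
    pose proof mul_ln_u_gamma as Hgt.
    pose proof (ln_le_sub1 _ Hw).
    nra.
  - rewrite Rmin_left, Rpower_u_gamma by lra.
    pose proof mul_ln_u_gamma as Hgt.
    pose proof (one_sub_inv_le_ln _ Hw).
    assert (Hinv : / (1 + gamma * z) * (1 + gamma * z) = 1) by (field; lra).
    assert (0 < / (1 + gamma * z)) by (apply Rinv_0_lt_compat; exact Hw).
    nra.
Qed.

End UGamma.

Lemma numer_bound_nonneg (u z : R) :
  0 <= z -> 0 <= u <= 1 -> Rabs ((1 - u) * z - 1) <= z + 1.
Proof. intros Hz Hu; apply Rabs_le; split; nra. Qed.

Lemma numer_bound_nonpos (u z p t : R) :
  z <= 0 -> 1 <= u -> 0 < p <= 1 -> - z * p <= t ->
  Rabs (((1 - u) * z - 1) * p) <= 1 + u * t.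
Proof.
  intros Hz Hu Hp Hzt.
  assert (Hzp : 0 <= - z * p) by (apply Rmult_le_pos; lra).
  assert (Hgrow : (u - 1) * (- z * p) <= (u - 1) * t) by (apply Rmult_le_compat_l; lra).
  assert (Hut : 0 <= u * t) by (apply Rmult_le_pos; lra).
  apply Rabs_le; split; nra.
Qed.

Theorem lemmaB3 (gamma mu sigma x : R) :
  0 < sigma ->
  0 < 1 + gamma * zstd mu sigma x ->
  let z := zstd mu sigma x in
  let u := u_gamma gamma z in
  (0 <= z -> Rabs (dsigma_ell gamma mu sigma x) <= (z + 1) / (sigma * (1 + gamma * z))) /\
  (z <= 0 -> Rabs (dsigma_ell gamma mu sigma x)
             <= / sigma * (1 + u * ln u) * Rpower u (Rmax gamma 0)).
Proof.
  intros Hs Hw z u; fold z in Hw.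
  unfold dsigma_ell; fold z; fold u.
  pose proof (u_gamma_pos gamma z) as Hu; fold u in Hu.
  split; intro Hz.
  - assert (Hu1 : u <= 1).
    { rewrite <- (exp_ln u) by exact Hu.
      apply exp_le_1, ln_u_gamma_nonpos; assumption. }
    unfold Rdiv; rewrite Rabs_mult, Rabs_inv, (Rabs_pos_eq (sigma * _)) by nra.
    apply Rmult_le_compat_r; [left; apply Rinv_0_lt_compat; nra|].
    apply numer_bound_nonneg; lra.
  - set (p := Rpower u (Rmin gamma 0)); set (q := Rpower u (Rmax gamma 0)).
    assert (Hlow : - z * p <= ln u) by exact (ln_u_gamma_lower gamma z Hw Hz).
    assert (Hp0 : 0 < p) by apply exp_pos.
    assert (Hu1 : 1 <= u).
    { assert (0 <= - z * p) by (apply Rmult_le_pos; lra).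
      pose proof (exp_ineq1_le (ln u)) as Hexp; rewrite exp_ln in Hexp by exact Hu; lra. }
    assert (Hp1 : p <= 1).
    { unfold p; rewrite <- (Rpower_O u Hu).
      apply Rle_Rpower; [lra|apply Rmin_r]. }
    assert (Hsplit : / (1 + gamma * z) = p * q).
    { unfold p, q; rewrite <- Rpower_plus, Rmin_plus_Rmax, Rplus_0_r.
      symmetry; apply Rpower_u_gamma; exact Hw. }
    unfold Rdiv; rewrite Rinv_mult, Hsplit.
    replace (((1 - u) * z - 1) * (/ sigma * (p * q)))
      with (/ sigma * (((1 - u) * z - 1) * p) * q) by ring.
    assert (0 < / sigma) by (apply Rinv_0_lt_compat; exact Hs).
    rewrite (Rabs_mult _ q), (Rabs_mult (/ sigma)), (Rabs_pos_eq (/ sigma)), (Rabs_pos_eq q)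
      by (try apply Rlt_le, exp_pos; lra).
    apply Rmult_le_compat_r; [apply Rlt_le, exp_pos|].
    apply Rmult_le_compat_l; [lra|].
    apply numer_bound_nonpos; auto; lra.
Qed.
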